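(* Let $q$ be a prime power, $n$ a positive integer with $\gcd(q,n)=1$, $P\subseteq\mathbb{Z}_n$ a $\mu_q$-invariant subset, $s\in\mathbb{Z}_n^*$ and $t\in\mathbb{Z}_n$ with $qt\equiv t\pmod n$. Then $\varphi_{s,t}(C_P)=C_{\rho_{s,t}(P)}$.
   Context: $R_n=\mathbb{F}_q[X]/\langle X^n-1\rangle$; cyclic codes are ideals of $R_n$. Fix a primitive $n$-th root of unity $\theta$ in an extension of $\mathbb{F}_q$. $\mu_q:\mathbb{Z}_n\to\mathbb{Z}_n$, $i\mapsto qi\bmod n$; $P$ is $\mu_q$-invariant if $\mu_q(P)=P$. For such $P$, $f_P(X)=\prod_{i\in P}(X-\theta^i)\in\mathbb{F}_q[X]$ and $C_P$ is the ideal of $R_n$ generated by $(X^n-1)/f_P(X)$ (the cyclic code with check polynomial $f_P$). $\rho_{s,t}:\mathbb{Z}_n\to\mathbb{Z}_n$, $i\mapsto s(i+t)\bmod n$ (it maps $\mu_q$-invariant sets to $\mu_q$-invariant sets). $\varphi_{s,t}:R_n\to R_n$, $a(X)\mapsto a(\theta^{-t}X^{s^{-1}})\bmod(X^n-1)$, where $s^{-1}$ is a positive integer with $ss^{-1}\equiv1\pmod n$ (note $\theta^{-t}\in\mathbb{F}_q$). *)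

From HB Require Import structures.
From mathcomp Require Import all_boot all_order all_algebra all_field.
Set Implicit Arguments. Unset Strict Implicit. Unset Printing Implicit Defensive.
Import GRing.Theory.
Local Open Scope ring_scope.

(* Z_n is represented by 'I_n (n > 0 follows from inhabitation). *)
Lemma ord_gt0 (n : nat) (i : 'I_n) : (0 < n)%N.
Proof. exact: leq_ltn_trans (leq0n i) (ltn_ord i). Qed.

(* k mod n as an element of 'I_n, given a witness i : 'I_n that n > 0 *)
Definition modI (n : nat) (i : 'I_n) (k : nat) : 'I_n :=
  Ordinal (ltn_pmod k (ord_gt0 i)).

Definition mu (q n : nat) (i : 'I_n) : 'I_n := modI i (q * i).

Definition mu_invariant (q n : nat) (P : {set 'I_n}) : Prop :=
  [set mu q i | i in P] = P.

Definition rho (n : nat) (s t : 'I_n) (i : 'I_n) : 'I_n := modI i (s * (i + t)).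

Definition rho_set (n : nat) (s t : 'I_n) (P : {set 'I_n}) : {set 'I_n} :=
  [set rho s t i | i in P].

Definition fP (F : fieldType) (L : fieldExtType F) (n : nat) (theta : L)
    (P : {set 'I_n}) : {poly L} :=
  \prod_(i in P) ('X - (theta ^+ i)%:P).

(* Elements of R_n = F_q[X]/<X^n - 1> are represented by their reduced
   representatives (polynomials of size <= n).  C_P is the ideal generated by
   h = (X^n - 1)/f_P, where h is an F_q-polynomial with h * f_P = X^n - 1. *)
Definition code (F : fieldType) (L : fieldExtType F) (n : nat) (theta : L)
    (P : {set 'I_n}) (a : {poly F}) : Prop :=
  exists h b : {poly F},
    map_poly (in_alg L) h * fP theta P = 'X^n - 1 /\
    a = (b * h) %% ('X^n - 1).

(* phi_{s,t}(a)(X) = a(c X^{s'}) mod (X^n - 1), where c = theta^{-t} in F_q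
   and s' = s^{-1} (a positive integer). *)
Definition phi (F : fieldType) (n : nat) (c : F) (s' : nat) (a : {poly F})
  : {poly F} :=
  (a \Po (c *: 'X^s')) %% ('X^n - 1).

From HB Require Import structures.
From mathcomp Require Import all_boot all_order all_algebra all_field ring.

Set Implicit Arguments.
Unset Strict Implicit.
Unset Printing Implicit Defensive.

Import GRing.Theory.
Local Open Scope ring_scope.

(* Over the extension L, a reduced polynomial a lies in C_Q exactly when
   a(theta^j) = 0 for every j outside Q; mu_q-invariance of Q is what puts the
   check polynomial f_Q over F_q, its coefficients being fixed by x |-> x^q.
   Since (phi_{s,t} b)(theta^k) = b(theta^(s^-1 k - t)) and
   rho_{s,t}(s^-1 k - t) = k, phi_{s,t} moves the zeros of C_P onto those of
   C_{rho(P)}.  The inverse of phi_{s,t} on reduced polynomials is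
   a |-> a(theta^(ts) X^s) mod (X^n - 1), as both sides agree at every n-th
   root of unity. *)

Section SpectralDescription.

Variables (F : fieldType) (L : fieldExtType F) (n : nat) (theta : L).
Hypothesis prim_theta : n.-primitive_root theta.

Local Notation "p ^%:A" := (map_poly (in_alg L) p) (format "p ^%:A").

Let n_gt0 : (0 < n)%N := prim_order_gt0 prim_theta.

Lemma prim_expr_ord_inj : injective (fun i : 'I_n => theta ^+ i).
Proof.
move=> i j /eqP; rewrite (eq_prim_root_expr prim_theta) !modn_small //.
by move=> /eqP/val_inj.
Qed.

Lemma prim_root_neq0 : theta != 0.
Proof.
apply: contraTneq (introT eqP (prim_expr_order prim_theta)) => ->.
by rewrite expr0n gtn_eqF // eq_sym oner_eq0.
Qed.

Lemma prim_exprV m : (m <= n)%N -> (theta ^+ m)^-1 = theta ^+ (n - m).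
Proof.
have thm_neq0 : theta ^+ m != 0 by rewrite expf_neq0 ?prim_root_neq0.
move=> le_mn; apply: (mulIf thm_neq0).
by rewrite mulVf // -exprD subnK // (prim_expr_order prim_theta).
Qed.

Lemma prim_exprX_order m : (theta ^+ m) ^+ n = 1.
Proof. by rewrite -exprM mulnC exprM (prim_expr_order prim_theta) expr1n. Qed.

Lemma Xn_sub1_prod : 'X^n - 1 = \prod_(j < n) ('X - (theta ^+ j)%:P).
Proof. by rewrite -(factor_Xn_sub_1 prim_theta) big_mkord. Qed.

Lemma fP_prim_expr_neq0 {Q : {set 'I_n}} {j : 'I_n} :
  j \notin Q -> (fP theta Q).[theta ^+ j] != 0.
Proof.
move=> jNQ; rewrite /fP horner_prod; apply/prodf_neq0 => i iQ.
rewrite hornerXsubC subr_eq0; apply: contraNneq jNQ => /prim_expr_ord_inj ->.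
exact: iQ.
Qed.

Lemma horner_modp_Xn_sub1 (p : {poly F}) (x : L) :
  x ^+ n = 1 -> (p %% ('X^n - 1))^%:A.[x] = p^%:A.[x].
Proof.
move=> xn1; rewrite map_modp [in RHS](divp_eq p^%:A ('X^n - 1)^%:A) hornerD hornerM.
by rewrite rmorphB /= map_polyXn rmorph1 !hornerE xn1 subrr mulr0 add0r.
Qed.

Let size_Xn_sub1 : size ('X^n - 1 : {poly F}) = n.+1.
Proof. by rewrite -polyC1 size_XnsubC. Qed.

Lemma size_modp_Xn_sub1 (p : {poly F}) : (size (p %% ('X^n - 1))%R <= n)%N.
Proof. by rewrite -ltnS -size_Xn_sub1 ltn_modp -size_poly_eq0 size_Xn_sub1. Qed.

Lemma size_code (Q : {set 'I_n}) (a : {poly F}) : code theta Q a -> (size a <= n)%N.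
Proof. by case=> h [b [_ ->]]; apply: size_modp_Xn_sub1. Qed.

Lemma poly_eq_on_prim_exprs (p r : {poly F}) :
  (size p <= n)%N -> (size r <= n)%N ->
  (forall k : 'I_n, p^%:A.[theta ^+ k] = r^%:A.[theta ^+ k]) -> p = r.
Proof.
move=> szp szr eq_pr; apply/eqP; rewrite -subr_eq0; apply: contraT => pr_neq0.
have : (size [seq theta ^+ k | k : 'I_n] < size (p - r)^%:A)%N.
  apply: max_poly_roots; first by rewrite map_poly_eq0.
    by apply/allP => x /mapP[k _ ->]; rewrite /root rmorphB hornerD hornerN eq_pr subrr.
  by rewrite map_inj_uniq ?enum_uniq //; apply: prim_expr_ord_inj.
rewrite size_map_poly size_map -cardE card_ord ltnNge.
by rewrite (leq_trans (size_polyD _ _)) // size_polyN geq_max szp szr.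
Qed.

Lemma codeP (Q : {set 'I_n}) :
  (exists h : {poly F}, h^%:A * fP theta Q = 'X^n - 1) ->
  forall a : {poly F}, code theta Q a <->
  (size a <= n)%N /\ (forall j : 'I_n, j \notin Q -> a^%:A.[theta ^+ j] = 0).
Proof.
move=> [h0 h0Q] a; split.
- case=> h [b [hQ ->]]; split=> [|j jNQ]; first exact: size_modp_Xn_sub1.
  rewrite horner_modp_Xn_sub1 ?prim_exprX_order // rmorphM hornerM.
  have /eqP : h^%:A.[theta ^+ j] * (fP theta Q).[theta ^+ j] = 0.
    by rewrite -hornerM hQ !hornerE prim_exprX_order subrr.
  by rewrite mulf_eq0 (negbTE (fP_prim_expr_neq0 jNQ)) orbF => /eqP->; rewrite mulr0.
- case=> sza a_roots; exists h0, (a %/ h0); split=> //.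
  have h0E : h0^%:A = \prod_(j in ~: Q) ('X - (theta ^+ j)%:P).
    have fP_neq0 : fP theta Q != 0 by apply/monic_neq0/monic_prod_XsubC.
    apply: (mulIf fP_neq0); rewrite h0Q Xn_sub1_prod /fP mulrC (bigID (mem Q)) /=.
    by congr (_ * _); apply: eq_bigl => j; rewrite inE.
  have h0_dvd_a : h0 %| a.
    rewrite -(dvdp_map (in_alg L)) h0E -big_enum /=.
    rewrite -(big_map (fun j : 'I_n => theta ^+ j) xpredT (fun z => 'X - z%:P)).
    apply: uniq_roots_dvdp.
      by apply/allP => x /mapP[j]; rewrite mem_enum inE => jNQ ->; rewrite /root a_roots.
    by rewrite uniq_rootsE map_inj_uniq ?enum_uniq //; apply: prim_expr_ord_inj.
  by rewrite divpK // modp_small // size_Xn_sub1.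
Qed.

Lemma horner_phi (c : F) (e : nat) (b : {poly F}) (x : L) :
  x ^+ n = 1 -> (phi n c e b)^%:A.[x] = b^%:A.[in_alg L c * x ^+ e].
Proof.
move=> xn1; rewrite horner_modp_Xn_sub1 // map_comp_poly horner_comp.
by rewrite map_polyZ map_polyXn hornerZ hornerXn.
Qed.

End SpectralDescription.

Section QFrobenius.

Variables (F : finFieldType) (L : fieldExtType F).

Definition qfrob (x : L) : L := x ^+ #|F|.

Lemma pchar_nat_card : [pchar L].-nat #|F|.
Proof.
have [p p_pr pcharFp] := finPcharP F.
have pcharLp : p \in [pchar L] by rewrite pchar_lalg.
by rewrite (card_pprimeChar pcharFp) pnatX (pnatE _ p_pr) pcharLp.
Qed.

Lemma qfrob_is_nmod_morphism : nmod_morphism qfrob.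
Proof.
split=> [|x y]; first by rewrite /qfrob expr0n eqn0Ngt (ltnW (finNzRing_gt1 F)).
by rewrite /qfrob exprDn_pchar // pchar_nat_card.
Qed.

Lemma qfrob_is_monoid_morphism : monoid_morphism qfrob.
Proof. by split=> [|x y]; rewrite /qfrob ?expr1n ?exprMn. Qed.

HB.instance Definition _ := GRing.isNmodMorphism.Build L L qfrob
  qfrob_is_nmod_morphism.
HB.instance Definition _ := GRing.isMonoidMorphism.Build L L qfrob
  qfrob_is_monoid_morphism.

Lemma polyOver1_qfrob (p : {poly L}) : map_poly qfrob p = p -> p \is a polyOver 1%VS.
Proof.
move=> qfrob_p; apply/polyOverP => i.
by rewrite Fermat's_little_theorem dimv1 expn1 -{2}qfrob_p coef_map.
Qed.

End QFrobenius.

Arguments qfrob {F L} x.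

Section CheckPolynomial.

Variables (F : finFieldType) (L : fieldExtType F) (n : nat) (theta : L).
Hypothesis prim_theta : n.-primitive_root theta.

Local Notation "p ^%:A" := (map_poly (in_alg L) p) (format "p ^%:A").

Lemma fP_cofactor (Q : {set 'I_n}) :
  mu_invariant #|F| Q -> exists h : {poly F}, h^%:A * fP theta Q = 'X^n - 1.
Proof.
move=> muQ.
have mu_inj : {in Q &, injective (@mu #|F| n)} by apply/imset_injP; rewrite muQ.
have qfrob_fP : map_poly qfrob (fP theta Q) = fP theta Q.
  rewrite /fP rmorph_prod /= -{2}muQ big_imset //=; apply: eq_bigr => i _.
  by rewrite map_polyXsubC (prim_expr_mod prim_theta) mulnC exprM.
have [f fE] := polyOver1P (polyOver1_qfrob qfrob_fP).
exists (('X^n - 1) %/ f); rewrite map_divp rmorphB /= map_polyXn rmorph1 -fE divpK //.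
by rewrite (Xn_sub1_prod prim_theta) (bigID (mem Q)) /= dvdp_mulr.
Qed.

End CheckPolynomial.

Lemma mu_invariant_rho_set (q n : nat) (s t : 'I_n) (P : {set 'I_n}) :
  mu_invariant q P -> (q * t = t %[mod n])%N -> mu_invariant q (rho_set s t P).
Proof.
move=> muP qt; rewrite /mu_invariant /rho_set -imset_comp -[in RHS]muP -imset_comp.
apply: eq_imset => i; apply: val_inj; rewrite /= modnMmr -[RHS]modnMmr modnDml.
have -> : (q * (s * (i + t)) = s * (q * i + q * t))%N by ring.
by rewrite -modnMmr -modnDmr qt modnDmr modnMmr.
Qed.

Section Reindexing.

Variables (n : nat) (s t : 'I_n) (s' : nat).
Hypothesis ss'1 : (s * s' = 1 %[mod n])%N.

Lemma modn_mul_inv x : (x * (s * s') = x %[mod n])%N.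
Proof. by rewrite -modnMmr ss'1 modnMmr muln1. Qed.

Lemma rho_inj : injective (rho s t).
Proof.
move=> i j /(congr1 val) /= eq_ij.
have : ((i + t) * (s * s') = (j + t) * (s * s') %[mod n])%N.
  have mulE x : (x * (s * s') = s' * (s * x))%N by ring.
  by rewrite !mulE -modnMmr eq_ij modnMmr.
rewrite !modn_mul_inv => /eqP; rewrite eqn_modDr !modn_small // => /eqP.
exact: val_inj.
Qed.

(* [n - t] represents [-t] modulo n, avoiding truncated subtraction. *)
Lemma rho_preimage k : rho s t (modI k (n - t + k * s')) = k.
Proof.
apply: val_inj; rewrite /= -modnMmr modnDml modnMmr.
have -> : (s * (n - t + k * s' + t) = s * n + k * (s * s'))%N.
  by rewrite addnAC subnK ?(ltnW (ltn_ord t)) //; ring.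
by rewrite modnMDl modn_mul_inv modn_small.
Qed.

End Reindexing.

Section RelabelledCodes.

Variables (F : finFieldType) (L : fieldExtType F) (n : nat) (theta : L).
Variables (P : {set 'I_n}) (s t : 'I_n) (c : F) (s' : nat).
Hypothesis prim_theta : n.-primitive_root theta.
Hypothesis muP : mu_invariant #|F| P.
Hypothesis qt : (#|F| * t = t %[mod n])%N.
Hypothesis cE : in_alg L c = theta ^- t.
Hypothesis ss'1 : (s * s' = 1 %[mod n])%N.

Local Notation "p ^%:A" := (map_poly (in_alg L) p) (format "p ^%:A").

Let codeP_P := codeP prim_theta (fP_cofactor prim_theta muP).
Let codeP_R :=
  codeP prim_theta (fP_cofactor prim_theta (mu_invariant_rho_set s muP qt)).

Let c_neq0 : in_alg L c != 0.
Proof. by rewrite cE invr_eq0 expf_neq0 // (prim_root_neq0 prim_theta). Qed.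

Lemma c_mul_prim_expr (k : 'I_n) :
  in_alg L c * (theta ^+ k) ^+ s' = theta ^+ modI k (n - t + k * s').
Proof.
rewrite -exprM cE (prim_exprV prim_theta (ltnW (ltn_ord t))) -exprD /=.
by rewrite (prim_expr_mod prim_theta).
Qed.

Let in_alg_cVX : in_alg L (c^-1 ^+ s) = (in_alg L c)^-1 ^+ s.
Proof. by rewrite rmorphXn fmorphV. Qed.

Lemma cV_mul_prim_expr (j : 'I_n) :
  in_alg L (c^-1 ^+ s) * (theta ^+ j) ^+ s = theta ^+ rho s t j.
Proof.
rewrite in_alg_cVX cE invrK -!exprM -exprD /= (prim_expr_mod prim_theta).
by congr (_ ^+ _); ring.
Qed.

Lemma code_phi b : code theta P b -> code theta (rho_set s t P) (phi n c s' b).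
Proof.
move=> /codeP_P[_ b_roots]; apply/codeP_R; split=> [|k kNR].
  exact: (size_modp_Xn_sub1 prim_theta).
rewrite (horner_phi _ _ _ (prim_exprX_order prim_theta k)) c_mul_prim_expr b_roots //.
apply: contra kNR => jP; rewrite -(rho_preimage t ss'1 k) mem_imset //.
exact: rho_inj ss'1.
Qed.

Lemma code_phi_inv a :
  code theta (rho_set s t P) a -> code theta P (phi n (c^-1 ^+ s) s a).
Proof.
move=> /codeP_R[_ a_roots]; apply/codeP_P; split=> [|j jNP].
  exact: (size_modp_Xn_sub1 prim_theta).
rewrite (horner_phi _ _ _ (prim_exprX_order prim_theta j)) cV_mul_prim_expr a_roots //.
by rewrite mem_imset //; apply: rho_inj ss'1.
Qed.

Lemma phi_invK (a : {poly F}) :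
  (size a <= n)%N -> phi n c s' (phi n (c^-1 ^+ s) s a) = a.
Proof.
move=> sza; apply: (poly_eq_on_prim_exprs prim_theta) => // [|k].
  exact: (size_modp_Xn_sub1 prim_theta).
rewrite (horner_phi _ _ _ (prim_exprX_order prim_theta k)) c_mul_prim_expr.
rewrite (horner_phi _ _ _ (prim_exprX_order prim_theta _)); congr (_.[_]).
rewrite -c_mul_prim_expr exprMn mulrA in_alg_cVX -exprMn mulVf // expr1n mul1r.
apply/eqP; rewrite -!exprM (eq_prim_root_expr prim_theta) -mulnA (mulnC s').
exact/eqP/modn_mul_inv.
Qed.

End RelabelledCodes.

Theorem theorem2p10 (F : finFieldType) (L : fieldExtType F) (n : nat)
    (theta : L) (P : {set 'I_n}) (s t : 'I_n) (c : F) (s' : nat) :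
  (0 < n)%N ->
  coprime #|F| n ->
  n.-primitive_root theta ->
  mu_invariant #|F| P ->
  coprime s n ->
  (#|F| * t = t %[mod n])%N ->
  in_alg L c = theta ^- t ->
  (0 < s')%N -> (s * s' = 1 %[mod n])%N ->
  forall a : {poly F},
    code theta (rho_set s t P) a <-> exists b, code theta P b /\ a = phi n c s' b.
Proof.
(* 0 < n, gcd(q, n) = 1 and gcd(s, n) = 1 follow from the other hypotheses. *)
move=> _ _ prim_theta muP _ qt cE _ ss'1 a.
split=> [codeR_a | [b [codeP_b ->]]].
  exists (phi n (c^-1 ^+ s) s a); split.
    exact: (code_phi_inv prim_theta muP qt cE ss'1 codeR_a).
  by rewrite (phi_invK prim_theta cE ss'1) ?(size_code prim_theta codeR_a).
exact: (code_phi prim_theta muP qt cE ss'1 codeP_b).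
Qed.
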